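(* There exists a $9$-CMS$(9,2)$.
   Context: Let $I_n=\{0,1,\dots,n-1\}$. An $n\times n$ integer matrix is a general magic square if all row sums, column sums, the main diagonal sum and the back diagonal sum (entries $(i,n-1-i)$) are equal. A general magic square $M=(m_{i,j})$ is a general $t$-multimagic square if each entrywise power $M^{*e}=(m_{i,j}^e)$, $e=1,\dots,t$, is a general magic square; if moreover its entries are exactly $0,1,\dots,n^2-1$ it is an MS$(n,t)$. Define $S_e(n)=\frac{1}{n}\sum_{k\in I_{n^2}}k^e$. A family $\{B_0,\dots,B_{m-1}\}$ of MS$(n,t)$s, $B_s=(b^{(s)}_{i,j})$, is an $m$-CMS$(n,t)$ if (R1) $\sum_{s\in I_m}\sum_{j\in I_n}(b^{(s)}_{i,j})^{t+1}=mS_{t+1}(n)$ for every $i$; (R2) $\sum_{s\in I_m}\sum_{i\in I_n}(b^{(s)}_{i,j})^{t+1}=mS_{t+1}(n)$ for every $j$; (R3) $\sum_{s}\sum_{i}(b^{(s)}_{i,i})^{t+1}=\sum_{s}\sum_{i}(b^{(s)}_{i,n-1-i})^{t+1}=mS_{t+1}(n)$. *)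

From mathcomp Require Import all_boot all_order all_algebra.
Unset Printing Implicit Defensive.
Import GRing.Theory Num.Theory.
Local Open Scope nat_scope.

Definition sqmat (n : nat) := 'I_n -> 'I_n -> nat.

Definition bk {n : nat} (i : 'I_n) : 'I_n := rev_ord i.

Definition magic_pow (n e : nat) (M : sqmat n) : Prop :=
  exists c : nat,
    (forall i : 'I_n, \sum_(j < n) M i j ^ e = c)%N /\
    (forall j : 'I_n, \sum_(i < n) M i j ^ e = c)%N /\
    (\sum_(i < n) M i i ^ e = c)%N /\
    (\sum_(i < n) M i (bk i) ^ e = c)%N.

Definition multimagic (n t : nat) (M : sqmat n) : Prop :=
  forall e : nat, (1 <= e <= t)%N -> magic_pow n e M.

Definition entries_std (n : nat) (M : sqmat n) : Prop :=
  (forall i j : 'I_n, M i j < n ^ 2)%N /\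
  (forall i j i' j' : 'I_n, M i j = M i' j' -> i = i' /\ j = j').

Definition MS (n t : nat) (M : sqmat n) : Prop :=
  multimagic n t M /\ entries_std n M.

Local Open Scope ring_scope.
Definition S_ (e n : nat) : rat :=
  (n%:R)^-1 * (\sum_(k < n ^ 2) (k ^ e)%N%:R).

(* m-CMS(n,t): family B_0..B_{m-1} of MS(n,t) with conditions R1-R3 *)
Definition CMS (m n t : nat) (B : 'I_m -> sqmat n) : Prop :=
  (forall s : 'I_m, MS n t (B s)) /\
  (forall i : 'I_n,
     (\sum_(s < m) \sum_(j < n) (B s i j ^ t.+1)%N%:R : rat) = m%:R * S_ t.+1 n) /\
  (forall j : 'I_n,
     (\sum_(s < m) \sum_(i < n) (B s i j ^ t.+1)%N%:R : rat) = m%:R * S_ t.+1 n) /\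
  (\sum_(s < m) \sum_(i < n) (B s i i ^ t.+1)%N%:R : rat) = m%:R * S_ t.+1 n /\
  (\sum_(s < m) \sum_(i < n) (B s i (bk i) ^ t.+1)%N%:R : rat) = m%:R * S_ t.+1 n.

From mathcomp Require Import all_boot all_order all_algebra.
Import GRing.Theory Num.Theory.

(* The nine squares are chosen so that, for each row index i, the entries of
   row i of all nine squares together run exactly once through 0, ..., 80, and
   likewise for every column index, for the main diagonals and for the back
   diagonals.  Any power sum over such a family of lines is then the full sum
   \sum_(k < 81) k ^ e = 9 * S_e(9), so R1-R3 hold for every exponent.  What
   remains (each square is an MS(9,2), and the permutation property itself) is
   a finite check. *)

Definition entries {n} (g : 'I_n -> 'I_n -> nat) : seq nat :=
  [seq g s j | s <- enum 'I_n, j <- enum 'I_n].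

Definition perm_range n (s : seq nat) : bool := perm_eq s (iota 0 (n ^ 2)).

Lemma entries_codom n (g : 'I_n -> 'I_n -> nat) :
  entries g = codom (fun p : 'I_n * 'I_n => g p.1 p.2).
Proof. by rewrite codomE enumT unlock /= /prod_enum map_allpairs. Qed.

Section PermRange.
Variable n : nat.
Implicit Types (g M : sqmat n).

Lemma big_entries {R : Type} {idx : R} (op : Monoid.com_law idx) (F : nat -> R) g :
  \big[op/idx]_(s < n) \big[op/idx]_(j < n) F (g s j) = \big[op/idx]_(x <- entries g) F x.
Proof. by rewrite entries_codom pair_bigA big_image. Qed.

Lemma big_entries_perm {R : Type} {idx : R} (op : Monoid.com_law idx) (F : nat -> R) g :
  perm_range n (entries g) ->
  \big[op/idx]_(s < n) \big[op/idx]_(j < n) F (g s j) = \big[op/idx]_(k < n ^ 2) F k.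
Proof.
move=> g_perm; rewrite big_entries (perm_big _ g_perm).
by rewrite -(big_mkord xpredT) /index_iota subn0.
Qed.

Lemma entries_std_perm M : perm_range n (entries M) -> entries_std n M.
Proof.
rewrite /perm_range entries_codom => M_perm; split=> [i j | i j i' j' eqM].
  have : M i j \in iota 0 (n ^ 2).
    by rewrite -(perm_mem M_perm) (codom_f (fun p : 'I_n * 'I_n => M p.1 p.2) (i, j)).
  by rewrite mem_iota.
have /injectiveP M_inj : uniq (codom (fun p : 'I_n * 'I_n => M p.1 p.2)).
  by rewrite (perm_uniq M_perm) iota_uniq.
by case: (M_inj (i, j) (i', j') eqM).
Qed.

Section PowerSums.
Local Open Scope ring_scope.
Hypothesis n_gt0 : (0 < n)%N.

Lemma mul_S_sum (e : nat) : n%:R * S_ e n = \sum_(k < n ^ 2) (k ^ e)%N%:R.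
Proof. by rewrite /S_ mulrA mulfV ?mul1r // pnatr_eq0 -lt0n. Qed.

Lemma sum_pow_perm (g : 'I_n -> 'I_n -> nat) (e : nat) : perm_range n (entries g) ->
  \sum_(s < n) \sum_(j < n) (g s j ^ e)%N%:R = n%:R * S_ e n :> rat.
Proof.
by move=> g_perm; rewrite mul_S_sum (big_entries_perm _ (fun k => (k ^ e)%N%:R) g g_perm).
Qed.

End PowerSums.
End PermRange.

Definition line_sums n e (M : sqmat n) : seq nat :=
  [:: \sum_(i < n) M i i ^ e, \sum_(i < n) M i (bk i) ^ e
    & [seq \sum_(j < n) M i j ^ e | i <- enum 'I_n] ++
      [seq \sum_(i < n) M i j ^ e | j <- enum 'I_n]].

Lemma magic_pow_constant n e (M : sqmat n) :
  constant (line_sums n e M) -> magic_pow n e M.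
Proof.
move=> /= /andP[/eqP back_diag /allP lines].
exists (\sum_(i < n) M i i ^ e); split; [|split; [|split]] => // [i | j].
  by apply/eqP/lines; rewrite mem_cat map_f ?mem_enum.
by apply/eqP/lines; rewrite mem_cat orbC map_f ?mem_enum.
Qed.

Definition multimagicb n t (M : sqmat n) : bool :=
  all (fun e => constant (line_sums n e M)) (iota 1 t).

Lemma multimagicb_sound n t (M : sqmat n) : multimagicb n t M -> multimagic n t M.
Proof.
move=> /allP M_magic e /andP[e_gt0 e_le_t]; apply/magic_pow_constant/M_magic.
by rewrite mem_iota e_gt0 add1n ltnS.
Qed.

Definition cms_certificate n t (B : 'I_n -> sqmat n) : bool :=
  [&& all (fun s => multimagicb n t (B s) && perm_range n (entries (B s))) (enum 'I_n),
      all (fun i => perm_range n (entries (fun s j => B s i j))) (enum 'I_n),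
      all (fun j => perm_range n (entries (fun s i => B s i j))) (enum 'I_n),
      perm_range n (entries (fun s i => B s i i)) &
      perm_range n (entries (fun s i => B s i (bk i)))].

Lemma cms_certificate_sound n t (B : 'I_n -> sqmat n) :
  (0 < n)%N -> cms_certificate n t B -> CMS n n t B.
Proof.
move=> n_gt0 /and5P[/allP squares /allP rows /allP cols diag back_diag].
split=> [s | ].
  have /andP[B_magic B_perm] := squares s (mem_enum _ s).
  by split; [apply: multimagicb_sound | apply: entries_std_perm].
split=> [i | ]; first exact: sum_pow_perm (rows i (mem_enum _ i)).
split=> [j | ]; first exact: sum_pow_perm (cols j (mem_enum _ j)).
by split; apply: sum_pow_perm.
Qed.

Lemma index_enum_ord n : index_enum 'I_n = enum 'I_n.
Proof. by rewrite enumT [index_enum _]unlock. Qed.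

Definition sqmat_of_seq n (rows : seq (seq nat)) : sqmat n :=
  fun i j => nth 0 (nth [::] rows i) j.

Definition cms9_data : seq (seq (seq nat)) :=
  [:: [:: [::  0; 39; 78; 58; 16; 46; 35; 65; 23];
        [:: 64; 22; 34; 41; 80;  2; 15; 45; 57];
        [:: 47; 59; 17; 21; 33; 63; 79;  1; 40];
        [:: 25; 28; 67; 74;  5; 44; 48; 60;  9];
        [:: 62; 11; 50; 27; 66; 24;  4; 43; 73];
        [:: 42; 72;  3; 10; 49; 61; 68; 26; 29];
        [:: 14; 53; 56; 69; 18; 30; 37; 76;  7];
        [:: 75;  6; 36; 52; 55; 13; 20; 32; 71];
        [:: 31; 70; 19;  8; 38; 77; 54; 12; 51]];
    [:: [:: 15; 45; 57; 64; 22; 34; 41; 80;  2];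
        [:: 79;  1; 40; 47; 59; 17; 21; 33; 63];
        [:: 35; 65; 23;  0; 39; 78; 58; 16; 46];
        [::  4; 43; 73; 62; 11; 50; 27; 66; 24];
        [:: 68; 26; 29; 42; 72;  3; 10; 49; 61];
        [:: 48; 60;  9; 25; 28; 67; 74;  5; 44];
        [:: 20; 32; 71; 75;  6; 36; 52; 55; 13];
        [:: 54; 12; 51; 31; 70; 19;  8; 38; 77];
        [:: 37; 76;  7; 14; 53; 56; 69; 18; 30]];
    [:: [:: 21; 33; 63; 79;  1; 40; 47; 59; 17];
        [:: 58; 16; 46; 35; 65; 23;  0; 39; 78];
        [:: 41; 80;  2; 15; 45; 57; 64; 22; 34];
        [:: 10; 49; 61; 68; 26; 29; 42; 72;  3];
        [:: 74;  5; 44; 48; 60;  9; 25; 28; 67];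
        [:: 27; 66; 24;  4; 43; 73; 62; 11; 50];
        [::  8; 38; 77; 54; 12; 51; 31; 70; 19];
        [:: 69; 18; 30; 37; 76;  7; 14; 53; 56];
        [:: 52; 55; 13; 20; 32; 71; 75;  6; 36]];
    [:: [:: 28; 67; 25;  5; 44; 74; 60;  9; 48];
        [:: 11; 50; 62; 66; 24; 27; 43; 73;  4];
        [:: 72;  3; 42; 49; 61; 10; 26; 29; 68];
        [:: 53; 56; 14; 18; 30; 69; 76;  7; 37];
        [::  6; 36; 75; 55; 13; 52; 32; 71; 20];
        [:: 70; 19; 31; 38; 77;  8; 12; 51; 54];
        [:: 39; 78;  0; 16; 46; 58; 65; 23; 35];
        [:: 22; 34; 64; 80;  2; 41; 45; 57; 15];
        [:: 59; 17; 47; 33; 63; 21;  1; 40; 79]];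
    [:: [:: 43; 73;  4; 11; 50; 62; 66; 24; 27];
        [:: 26; 29; 68; 72;  3; 42; 49; 61; 10];
        [:: 60;  9; 48; 28; 67; 25;  5; 44; 74];
        [:: 32; 71; 20;  6; 36; 75; 55; 13; 52];
        [:: 12; 51; 54; 70; 19; 31; 38; 77;  8];
        [:: 76;  7; 37; 53; 56; 14; 18; 30; 69];
        [:: 45; 57; 15; 22; 34; 64; 80;  2; 41];
        [::  1; 40; 79; 59; 17; 47; 33; 63; 21];
        [:: 65; 23; 35; 39; 78;  0; 16; 46; 58]];
    [:: [:: 49; 61; 10; 26; 29; 68; 72;  3; 42];
        [::  5; 44; 74; 60;  9; 48; 28; 67; 25];
        [:: 66; 24; 27; 43; 73;  4; 11; 50; 62];
        [:: 38; 77;  8; 12; 51; 54; 70; 19; 31];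
        [:: 18; 30; 69; 76;  7; 37; 53; 56; 14];
        [:: 55; 13; 52; 32; 71; 20;  6; 36; 75];
        [:: 33; 63; 21;  1; 40; 79; 59; 17; 47];
        [:: 16; 46; 58; 65; 23; 35; 39; 78;  0];
        [:: 80;  2; 41; 45; 57; 15; 22; 34; 64]];
    [:: [:: 56; 14; 53; 30; 69; 18;  7; 37; 76];
        [:: 36; 75;  6; 13; 52; 55; 71; 20; 32];
        [:: 19; 31; 70; 77;  8; 38; 51; 54; 12];
        [:: 78;  0; 39; 46; 58; 16; 23; 35; 65];
        [:: 34; 64; 22;  2; 41; 80; 57; 15; 45];
        [:: 17; 47; 59; 63; 21; 33; 40; 79;  1];
        [:: 67; 25; 28; 44; 74;  5;  9; 48; 60];
        [:: 50; 62; 11; 24; 27; 66; 73;  4; 43];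
        [::  3; 42; 72; 61; 10; 49; 29; 68; 26]];
    [:: [:: 71; 20; 32; 36; 75;  6; 13; 52; 55];
        [:: 51; 54; 12; 19; 31; 70; 77;  8; 38];
        [::  7; 37; 76; 56; 14; 53; 30; 69; 18];
        [:: 57; 15; 45; 34; 64; 22;  2; 41; 80];
        [:: 40; 79;  1; 17; 47; 59; 63; 21; 33];
        [:: 23; 35; 65; 78;  0; 39; 46; 58; 16];
        [:: 73;  4; 43; 50; 62; 11; 24; 27; 66];
        [:: 29; 68; 26;  3; 42; 72; 61; 10; 49];
        [::  9; 48; 60; 67; 25; 28; 44; 74;  5]];
    [:: [:: 77;  8; 38; 51; 54; 12; 19; 31; 70];
        [:: 30; 69; 18;  7; 37; 76; 56; 14; 53];
        [:: 13; 52; 55; 71; 20; 32; 36; 75;  6];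
        [:: 63; 21; 33; 40; 79;  1; 17; 47; 59];
        [:: 46; 58; 16; 23; 35; 65; 78;  0; 39];
        [::  2; 41; 80; 57; 15; 45; 34; 64; 22];
        [:: 61; 10; 49; 29; 68; 26;  3; 42; 72];
        [:: 44; 74;  5;  9; 48; 60; 67; 25; 28];
        [:: 24; 27; 66; 73;  4; 43; 50; 62; 11]]].


Definition cms9 (s : 'I_9) : sqmat 9 := sqmat_of_seq 9 (nth [::] cms9_data s).

(* [enum 'I_n] does not evaluate (it goes through [insub], hence through the
   opaque [idP]), so enumerations are first unfolded with [enum_ordSl]. *)
Lemma cms9_certificate : cms_certificate 9 2 cms9.
Proof.
rewrite /cms_certificate /multimagicb /line_sums /perm_range /entries.
by rewrite !index_enum_ord !enum_ordSl enum_ord0 unlock; vm_compute.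
Qed.

Theorem lemma3p1 : exists B : 'I_9 -> sqmat 9, CMS 9 9 2 B.
Proof. by exists cms9; apply: cms_certificate_sound cms9_certificate. Qed.
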